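(* Let $d \geq 2$, $n \geq 1$, $\varphi(t) = \frac12 t^2$ and $w_{ij} = 1$ for all $i,j$. If $X \in \mathcal{M}$ is a critical point of $f(X) = \frac14\|X^\top X\|_F^2$ at which the Riemannian Hessian is negative semidefinite, then $x_i^\top x_j \neq 0$ for all $i, j$.
   Context: $\mathcal{M} = (\mathbb{S}^{d-1})^n$ is the set of $X \in \mathbb{R}^{d\times n}$ with unit-norm columns $x_1,\dots,x_n$, a Riemannian submanifold of $\mathbb{R}^{d\times n}$ with the Frobenius metric; gradient and Hessian are Riemannian. *)

From HB Require Import structures.
From mathcomp Require Import all_boot all_order all_algebra.
From mathcomp Require Import all_classical all_reals all_analysis.
Set Implicit Arguments. Unset Strict Implicit. Unset Printing Implicit Defensive.
Import Order.TTheory GRing.Theory Num.Theory.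
Import numFieldNormedType.Exports.
Local Open Scope ring_scope.

Section Sphere.
Variables (R : realType) (d n : nat).
Notation Mat := 'M[R]_(d, n).

Definition frob (A B : Mat) : R := \sum_(k < d) \sum_(i < n) A k i * B k i.

Definition coldot (X Y : Mat) (i j : 'I_n) : R := \sum_(k < d) X k i * Y k j.

(* X belongs to M = (S^{d-1})^n : unit-norm columns *)
Definition on_M (X : Mat) : Prop := forall i, coldot X X i i = 1.

Definition tangent (X V : Mat) : Prop := forall i, coldot X V i i = 0.

Definition proj (X Z : Mat) : Mat :=
  \matrix_(k < d, i < n) (Z k i - coldot X Z i i * X k i).

Definition egrad (f : Mat -> R) (X : Mat) : Mat :=
  \matrix_(k < d, i < n) ('D_(delta_mx k i) f X).

Definition ehess (f : Mat -> R) (X V : Mat) : Mat :=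
  'D_V (egrad f) X.

Definition rgrad (f : Mat -> R) (X : Mat) : Mat := proj X (egrad f X).

(* Riemannian Hessian on M (product of spheres), Absil–Mahony–Sepulchre:
   Hess f(X)[V] = Proj_X(D^2 f(X)[V]) - V ddiag(X^T grad f(X)) *)
Definition rhess (f : Mat -> R) (X V : Mat) : Mat :=
  \matrix_(k < d, i < n)
    (proj X (ehess f X V) k i - V k i * coldot X (egrad f X) i i).

Definition fobj (X : Mat) : R :=
  4^-1 * \sum_(i < n) \sum_(j < n) (coldot X X i j) ^+ 2.

End Sphere.

(* If two columns were orthogonal, x_i^T x_j = 0, then rotating x_i towards x_j
   (tangent direction V with x_j in column i and zeros elsewhere) gives
   <V, Hess f(X)[V]> = 1 + l_j - l_i, where l_i = sum_b (x_i^T x_b)^2 is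
   x_i^T grad f(X)_i.  The same with i and j exchanged gives 1 + l_i - l_j, and
   the two values sum to 2 > 0, so the Hessian cannot be negative semidefinite. *)
Set Warnings "-notation-overridden,-ambiguous-paths,-notation-incompatible-prefix".
From HB Require Import structures.
From mathcomp Require Import all_boot all_order all_algebra.
From mathcomp Require Import all_classical all_reals all_analysis.
Import Order.TTheory GRing.Theory Num.Theory.
Import numFieldNormedType.Exports.
From mathcomp Require Import ring lra.
Set Implicit Arguments. Unset Strict Implicit. Unset Printing Implicit Defensive.
Local Open Scope ring_scope.
Local Open Scope classical_set_scope.

Lemma derive_horner_increment (R : realType) (V W : normedModType R)
    (f : V -> W) (a v : V) (B C D E : W) :
  (forall h : R, f (h *: v + a) - f a = h *: (B + h *: (C + h *: (D + h *: E)))) ->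
  'D_v f a = B.
Proof.
move=> incr; rewrite /derive; apply: cvg_lim => //.
pose P h := B + h *: (C + h *: (D + h *: E)).
apply: (@cvg_trans _ (P @ 0^')).
  apply: near_eq_cvg; near=> h.
  have h0 : h != 0 by near: h; exact: nbhs_dnbhs_neq.
  by rewrite /= incr scalerA mulVf // scale1r.
have P_cont : P x @[x --> 0] --> P 0.
  by repeat first [exact: cvg_cst | exact: cvg_id | apply: cvgD | apply: cvgZ].
by move: P_cont; rewrite {2}/P scale0r addr0; exact: cvg_within_filter.
Unshelve. all: by end_near.
Qed.

Section Gram.
Variables (R : realType) (d n : nat).
Notation Mat := 'M[R]_(d, n).
Local Notation f := (@fobj R d n).
Implicit Types (A V X Y : Mat) (h : R).

Lemma coldotC X Y i j : coldot X Y i j = coldot Y X j i.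
Proof. by apply: eq_bigr => k _; rewrite mulrC. Qed.

Lemma coldot_shift A Y h i j :
  coldot (h *: A + Y) (h *: A + Y) i j = coldot Y Y i j
    + h * (coldot A Y i j + coldot Y A i j) + h ^+ 2 * coldot A A i j.
Proof.
rewrite /coldot mulrDr !mulr_sumr -!big_split /=.
by apply: eq_bigr => k _; rewrite !mxE; ring.
Qed.

Lemma coldot_delta_mx k i Y a b : coldot (delta_mx k i) Y a b = (a == i)%:R * Y k b.
Proof.
rewrite /coldot (bigD1 k) //= big1 => [|l /negbTE lk]; rewrite mxE ?lk //= ?mul0r //.
by rewrite eqxx /= addr0.
Qed.

Lemma sum_delta_natr (F : 'I_n -> R) i : \sum_a (a == i)%:R * F a = F i.
Proof.
by rewrite (bigD1 i) //= eqxx mul1r big1 ?addr0 // => a /negbTE ->; rewrite mul0r.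
Qed.

Lemma fobj_increment A Y : exists C D E : R, forall h,
  f (h *: A + Y) - f Y = h *: (2^-1 * \sum_i \sum_j
      coldot Y Y i j * (coldot A Y i j + coldot Y A i j) + h *: (C + h *: (D + h *: E))).
Proof.
pose g (Z : Mat) (i j : 'I_n) := coldot Z Z i j.
pose p (i j : 'I_n) := coldot A Y i j + coldot Y A i j.
exists (4^-1 * \sum_i \sum_j (p i j ^+ 2 + 2 * g Y i j * g A i j)),
  (4^-1 * \sum_i \sum_j (2 * p i j * g A i j)), (4^-1 * \sum_i \sum_j g A i j ^+ 2).
move=> h; rewrite /fobj !pair_bigA /= -mulrBr -sumrB -![h *: (_ : R)]/(h * _).
rewrite !mulr_sumr; do 3 rewrite -big_split /= !mulr_sumr.
by apply: eq_bigr => ij _; rewrite coldot_shift /p /g; field.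
Qed.

Definition fgrad X : Mat := \matrix_(k, i) \sum_j coldot X X i j * X k j.

Lemma egrad_fobj X : egrad f X = fgrad X.
Proof.
apply/matrixP => k i; rewrite !mxE.
have [C [D [E incr]]] := fobj_increment (delta_mx k i) X.
rewrite (derive_horner_increment incr).
have sym : \sum_a \sum_b coldot X X a b * coldot X (delta_mx k i) a b
         = \sum_a \sum_b coldot X X a b * coldot (delta_mx k i) X a b.
  rewrite exchange_big; apply: eq_bigr => a _; apply: eq_bigr => b _.
  by rewrite [coldot X (delta_mx _ _) _ _]coldotC [coldot X X b a]coldotC.
have -> : \sum_a \sum_b
      coldot X X a b * (coldot (delta_mx k i) X a b + coldot X (delta_mx k i) a b)
    = 2 * \sum_a \sum_b coldot X X a b * coldot (delta_mx k i) X a b.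
  rewrite mulr_natl mulr2n -{2}sym -big_split; apply: eq_bigr => a _.
  by rewrite -big_split; apply: eq_bigr => b _; rewrite mulrDr.
rewrite mulrA mulVf ?pnatr_eq0 // mul1r.
under eq_bigr do under eq_bigr do rewrite coldot_delta_mx mulrCA.
under eq_bigr do rewrite -mulr_sumr.
by rewrite (sum_delta_natr (fun a => \sum_b coldot X X a b * X k b)).
Qed.

Definition fhess X V : Mat := \matrix_(k, i) \sum_j
  ((coldot V X i j + coldot X V i j) * X k j + coldot X X i j * V k j).

Lemma fgrad_increment V X : exists C D E : Mat, forall h,
  fgrad (h *: V + X) - fgrad X = h *: (fhess X V + h *: (C + h *: (D + h *: E))).
Proof.
exists (\matrix_(k, i) \sum_j
    (coldot V V i j * X k j + (coldot V X i j + coldot X V i j) * V k j)),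
  (\matrix_(k, i) \sum_j coldot V V i j * V k j), 0.
move=> h; apply/matrixP => k i; rewrite !mxE mulr0 addr0 -sumrB !mulr_sumr.
do 2 rewrite -big_split /= !mulr_sumr.
by apply: eq_bigr => j _; rewrite coldot_shift !mxE; ring.
Qed.

Lemma ehess_fobj X V : ehess f X V = fhess X V.
Proof.
have [C [D [E incr]]] := fgrad_increment V X.
by rewrite /ehess (boolp.funext egrad_fobj) (derive_horner_increment incr).
Qed.

Definition rotation_dir X i j : Mat := \matrix_(k, a) ((a == i)%:R * X k j).

Lemma coldot_rotation_dir X i j a b :
  coldot X (rotation_dir X i j) a b = (b == i)%:R * coldot X X a j.
Proof. by rewrite /coldot mulr_sumr; apply: eq_bigr => k _; rewrite mxE mulrCA. Qed.

Lemma tangent_rotation_dir X i j : coldot X X i j = 0 -> tangent X (rotation_dir X i j).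
Proof.
move=> Xij a; rewrite /tangent coldot_rotation_dir.
by case: eqP => [->|_]; rewrite ?Xij ?mulr0 ?mul0r.
Qed.

Lemma frob_rotation_dir X i j M : frob (rotation_dir X i j) M = \sum_k X k j * M k i.
Proof.
apply: eq_bigr => k _; under eq_bigr do rewrite mxE -mulrA.
exact: (sum_delta_natr (fun a => X k j * M k a)).
Qed.

Lemma fhess_rotation_dir X i j k : on_M X -> coldot X X i j = 0 ->
  fhess X (rotation_dir X i j) k i = fgrad X k j + X k j.
Proof.
move=> XM Xij; rewrite !mxE big_split /=; congr (_ + _).
  apply: eq_bigr => b _; rewrite coldot_rotation_dir Xij mulr0 addr0.
  by congr (_ * _); apply: eq_bigr => l _; rewrite mxE eqxx mul1r.
under eq_bigr do rewrite mxE mulrCA.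
by rewrite (sum_delta_natr (fun b => coldot X X i b * X k j)) XM mul1r.
Qed.

Lemma hess_form_rotation_dir X i j : on_M X -> coldot X X i j = 0 ->
  frob (rotation_dir X i j) (rhess f X (rotation_dir X i j))
    = 1 + coldot X (fgrad X) j j - coldot X (fgrad X) i i.
Proof.
move=> XM Xij; set V := rotation_dir X i j.
rewrite /rhess ehess_fobj egrad_fobj frob_rotation_dir.
transitivity (\sum_k X k j * fhess X V k i - coldot X (fhess X V) i i * coldot X X j i
   - coldot X (fgrad X) i i * coldot X X j j).
  rewrite [coldot X X j i]/coldot [coldot X X j j]/coldot !mulr_sumr -!sumrB.
  by apply: eq_bigr => k _; rewrite !mxE eqxx mul1r; ring.
rewrite [coldot X X j i]coldotC Xij XM mulr0 subr0 mulr1 -(XM j) /coldot -big_split /=.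
by congr (_ - _); apply: eq_bigr => k _; rewrite fhess_rotation_dir // mulrDr addrC.
Qed.

End Gram.

Theorem mainTheorem17 (R : realType) (d n : nat) (hd : (2 <= d)%N) (hn : (1 <= n)%N)
  (X : 'M[R]_(d, n)) :
  on_M X ->
  rgrad (@fobj R d n) X = 0 ->
  (forall V : 'M[R]_(d, n), tangent X V ->
     frob V (rhess (@fobj R d n) X V) <= 0) ->
  forall i j : 'I_n, coldot X X i j != 0.
Proof.
move=> XM _ hess_nsd i j.
have [<-|_] := eqVneq i j; first by rewrite XM oner_neq0.
apply/negP => /eqP Xij; have Xji : coldot X X j i = 0 by rewrite coldotC.
have := hess_nsd _ (tangent_rotation_dir Xij).
have := hess_nsd _ (tangent_rotation_dir Xji).
rewrite !hess_form_rotation_dir //; lra.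
Qed.
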